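(* Let $G$ be a graph with no isolated vertices. For every integer $\ell$ with $\gamma_t(G)\le \ell \le \gamma_{\rm gr}^t(G)$ there is a total dominating sequence of $G$ of length $\ell$.
   Context: $\gamma_t(G)$ is the minimum size of a set $D$ such that every vertex of $G$ has a neighbor in $D$. $N(v)$ denotes the open neighborhood of $v$. A sequence $S=(v_1,\ldots,v_k)$ of distinct vertices is a legal sequence if $N(v_i)\setminus \bigcup_{j=1}^{i-1} N(v_j)\neq\emptyset$ for every $i\in\{2,\ldots,k\}$, and a total dominating sequence if moreover $\{v_1,\ldots,v_k\}$ is a total dominating set of $G$. $\gamma_{\rm gr}^t(G)$ is the maximum length of a total dominating sequence of $G$. *)

From mathcomp Require Import all_boot.
Set Warnings "-notation-overridden".
Set Implicit Arguments. Unset Strict Implicit. Unset Printing Implicit Defensive.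

Definition simple_graph (T : finType) (e : rel T) : Prop :=
  symmetric e /\ irreflexive e.

Definition nbhd (T : finType) (e : rel T) (v : T) : {set T} := [set u | e v u].

Definition no_isolated (T : finType) (e : rel T) : Prop :=
  forall v : T, exists u : T, e v u.

Definition total_dom (T : finType) (e : rel T) (D : {set T}) : bool :=
  [forall v : T, [exists u in D, e v u]].

(* gamma_t(G): minimum size of a total dominating set
   (#|T| is only a default, irrelevant when there are no isolated vertices) *)
Definition gamma_t (T : finType) (e : rel T) : nat :=
  \big[minn/#|T|]_(D : {set T} | total_dom e D) #|D|.

Definition legal_seq (T : finType) (e : rel T) (s : seq T) : bool :=
  uniq s &&
  [forall i : 'I_(size s),
     (0 < i) ==>
     (nbhd e (tnth (in_tuple s) i) :\:
        \bigcup_(j < size s | j < i) nbhd e (tnth (in_tuple s) j) != set0)].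

Definition total_dom_seq (T : finType) (e : rel T) (s : seq T) : bool :=
  legal_seq e s && total_dom e [set x in s].

(* gamma_gr^t(G): maximum length of a total dominating sequence
   (legal sequences are uniq, hence of length <= #|T|) *)
Definition gamma_grt (T : finType) (e : rel T) : nat :=
  \max_(k < #|T|.+1 | [exists t : k.-tuple T, total_dom_seq e t]) k.

From mathcomp Require Import all_boot.
Set Implicit Arguments. Unset Strict Implicit. Unset Printing Implicit Defensive.

(* Fix a minimum total dominating set D and a maximum total dominating
   sequence S.  Any legal sequence can be completed to a total dominating
   sequence by greedily appending those vertices of D that still have a
   neighbour outside the current neighbourhood union; this adds at most |D|
   vertices and never fails to dominate, since every vertex has a neighbour
   in D.  Completing the prefix of S of length i gives a total dominating
   sequence of length f i, where f 0 <= |D| = gamma_t, f |S| >= gamma_gr^t,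
   and f (i+1) <= f i + 1 because a longer prefix dominates more, leaving
   fewer vertices for the greedy step.  A discrete intermediate value
   argument then hits every length in between. *)

Section LegalSequences.
Variables (T : finType) (e : rel T).

Definition has_new_nbr (d : T) (acc : seq T) : bool :=
  [exists y, e d y && ~~ has (e^~ y) acc].

(* [legal_ext acc s]: appending [s] to [acc] keeps the sequence legal; the
   head of the whole sequence carries no condition. *)
Fixpoint legal_ext (acc s : seq T) : bool :=
  if s is x :: s' then
    ((acc == [::]) || has_new_nbr x acc) && legal_ext (rcons acc x) s'
  else true.

Lemma legal_ext_cat acc s1 s2 :
  legal_ext acc (s1 ++ s2) = legal_ext acc s1 && legal_ext (acc ++ s1) s2.
Proof.
elim: s1 acc => [|x s1 IH] acc /=; first by rewrite cats0.
by rewrite IH cat_rcons andbA.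
Qed.

Lemma legal_extP x0 acc s :
  reflect (forall i, i < size s -> let k := size acc + i in
             (0 < k) ==> has_new_nbr (nth x0 (acc ++ s) k) (take k (acc ++ s)))
          (legal_ext acc s).
Proof.
elim: s acc => [|x s IH] acc /=; first by apply: ReflectT.
have head_cond : ((acc == [::]) || has_new_nbr x acc) =
    ((0 < size acc + 0) ==> has_new_nbr (nth x0 (acc ++ x :: s) (size acc + 0))
                                        (take (size acc + 0) (acc ++ x :: s))).
  by rewrite addn0 nth_cat ltnn subnn take_size_cat //; case: acc {IH}.
have shift i : size (rcons acc x) + i = size acc + i.+1.
  by rewrite size_rcons addSn addnS.
rewrite head_cond; apply: (iffP andP) => [[H0 /IH Hs] [|i] Hi //|H].
  by have := Hs i Hi; rewrite cat_rcons shift.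
split; first exact: H.
by apply/IH => i Hi; rewrite cat_rcons shift; apply: H.
Qed.

Lemma bigcup_nbhd_take s i : i <= size s ->
  \bigcup_(j < size s | j < i) nbhd e (tnth (in_tuple s) j)
  = [set y | has (e^~ y) (take i s)].
Proof.
move=> le_i_s; apply/setP => y; rewrite inE.
apply/bigcupP/(has_nthP y) => [[j lt_j_i]|[j]].
  by rewrite inE (tnth_nth y) => ejy; exists j; rewrite ?size_takel ?nth_take.
rewrite size_takel // => lt_j_i; rewrite nth_take // => ejy.
exists (Ordinal (leq_trans lt_j_i le_i_s)) => //.
by rewrite inE (tnth_nth y).
Qed.

Lemma legal_seqE s : legal_seq e s = uniq s && legal_ext [::] s.
Proof.
rewrite /legal_seq; congr (_ && _).
case: s => [|x0 s']; first by apply/forallP => -[].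
set s := x0 :: s'.
apply/forallP/(legal_extP x0) => H i; last first.
  rewrite (bigcup_nbhd_take (ltnW (ltn_ord i))) (tnth_nth x0).
  have := H i (ltn_ord i); rewrite /= add0n.
  move/implyP=> Hi; apply/implyP => /Hi /existsP [y /andP[ey Hy]].
  by apply/set0Pn; exists y; rewrite !inE ey Hy.
move=> lt_i_s; have := H (Ordinal lt_i_s).
rewrite /= add0n (bigcup_nbhd_take (ltnW lt_i_s)) (tnth_nth x0).
move/implyP=> Hi; apply/implyP => /Hi /set0Pn [y]; rewrite !inE => /andP[Hy ey].
by apply/existsP; exists y; rewrite ey Hy.
Qed.

Lemma legal_seq_take s i : legal_seq e s -> legal_seq e (take i s).
Proof.
rewrite !legal_seqE => /andP[s_uniq]; rewrite take_uniq //=.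
by rewrite -{1}(cat_take_drop i s) legal_ext_cat => /andP[].
Qed.

Fixpoint greedy_ext (acc ds : seq T) : seq T :=
  if ds is d :: ds' then
    if has_new_nbr d acc then d :: greedy_ext (rcons acc d) ds'
    else greedy_ext acc ds'
  else [::].

Lemma has_new_nbr_notin d acc : has_new_nbr d acc -> d \notin acc.
Proof.
move/existsP=> [y /andP[edy]]; apply: contraNN => d_acc.
by apply/hasP; exists d.
Qed.

Lemma legal_ext_greedy_ext acc ds : uniq acc -> legal_ext [::] acc ->
  uniq (acc ++ greedy_ext acc ds) && legal_ext [::] (acc ++ greedy_ext acc ds).
Proof.
elim: ds acc => [|d ds IH] acc acc_uniq acc_legal /=.
  by rewrite cats0 acc_uniq acc_legal.
case: ifP => new_d; last exact: IH.
rewrite -cat_rcons; apply: IH.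
  by rewrite rcons_uniq acc_uniq has_new_nbr_notin.
by rewrite -cats1 legal_ext_cat acc_legal /= new_d orbT.
Qed.

Lemma size_greedy_ext acc ds : size (greedy_ext acc ds) <= size ds.
Proof.
elim: ds acc => [|d ds IH] acc //=.
by case: ifP => _; [rewrite ltnS | apply: leqW].
Qed.

Lemma greedy_ext_dominates acc ds d y : d \in ds -> e d y ->
  has (e^~ y) (acc ++ greedy_ext acc ds).
Proof.
elim: ds acc => [|d' ds IH] acc //=; rewrite inE => /orP[/eqP <- | d_ds] edy.
  case: ifP => [_ | /negbT old_d].
    by rewrite -cat_rcons has_cat has_rcons edy.
  move: old_d; rewrite negb_exists => /forallP/(_ y).
  by rewrite edy negbK has_cat => ->.
case: ifP => _; last exact: IH.
by rewrite -cat_rcons; apply: IH.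
Qed.

Lemma leq_size_greedy_ext ds acc1 acc2 :
  (forall y, has (e^~ y) acc1 -> has (e^~ y) acc2) ->
  size (greedy_ext acc2 ds) <= size (greedy_ext acc1 ds).
Proof.
elim: ds acc1 acc2 => [|d ds IH] acc1 acc2 dom12 //=.
have new12 : has_new_nbr d acc2 -> has_new_nbr d acc1.
  move/existsP=> [y /andP[edy Hy]]; apply/existsP; exists y; rewrite edy /=.
  by move: Hy; apply: contraNN; apply: dom12.
case: ifP => new2; case: ifP => new1 /=.
- rewrite ltnS; apply: IH => y; rewrite !has_rcons.
  by case/orP=> [-> // | /dom12 ->]; rewrite orbT.
- by rewrite new12 in new1.
- apply/leqW/IH => y; rewrite has_rcons => /orP[edy | /dom12 //].
  move/negbT: new2; rewrite negb_exists => /forallP/(_ y).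
  by rewrite edy negbK.
- exact: IH.
Qed.

Lemma size_greedy_ext_take_succ ds s i :
  size (take i.+1 s ++ greedy_ext (take i.+1 s) ds)
    <= (size (take i s ++ greedy_ext (take i s) ds)).+1.
Proof.
case: (ltnP i (size s)) => [lt_is | le_si]; last first.
  by rewrite !take_oversize ?(leq_trans le_si).
rewrite !size_cat !size_takel ?(ltnW lt_is) // addSn ltnS leq_add2l.
apply: leq_size_greedy_ext => y.
by rewrite -addn1 takeD has_cat => ->.
Qed.

Lemma total_dom_seq_greedy_ext D acc :
  symmetric e -> total_dom e D -> legal_seq e acc ->
  total_dom_seq e (acc ++ greedy_ext acc (enum D)).
Proof.
move=> e_sym D_dom; rewrite /total_dom_seq !legal_seqE.
move=> /andP[acc_uniq acc_legal].
rewrite legal_ext_greedy_ext //=; apply/forallP => v.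
have /existsP [d /andP[d_D evd]] := forallP D_dom v.
have /hasP [u u_s euv] : has (e^~ v) (acc ++ greedy_ext acc (enum D)).
  by apply: (greedy_ext_dominates _ (d := d)); rewrite ?mem_enum // e_sym.
by apply/existsP; exists u; rewrite inE u_s e_sym.
Qed.

End LegalSequences.

Lemma discrete_ivt (f : nat -> nat) (l n : nat) :
  (forall i, f i.+1 <= (f i).+1) ->
  f 0 <= l -> l <= f n -> exists2 i, i <= n & f i = l.
Proof.
move=> f_step; elim: n => [|n IH] f0_l l_fn.
  by exists 0 => //; apply/eqP; rewrite eqn_leq l_fn f0_l.
case: (leqP l (f n)) => [l_fn' | fn_l].
  by have [i le_in fi] := IH f0_l l_fn'; exists i => //; apply: leqW.
exists n.+1 => //; apply/eqP; rewrite eqn_leq l_fn andbT.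
exact: leq_trans (f_step n) fn_l.
Qed.

Section Extrema.
Variables (T : finType) (e : rel T).

Lemma gamma_t_attained : no_isolated e ->
  exists2 D, total_dom e D & #|D| <= gamma_t e.
Proof.
move=> e_noiso.
have setT_dom : total_dom e setT.
  apply/forallP=> v; have [u evu] := e_noiso v.
  by apply/existsP; exists u; rewrite in_setT.
have [D D_dom D_min] := arg_minnP (fun D : {set T} => #|D|) setT_dom.
exists D => //; apply: (big_ind (fun x => #|D| <= x)) => //.
  exact: max_card.
by move=> x y; rewrite leq_min => -> ->.
Qed.

Lemma gamma_grt_attained s0 : total_dom_seq e s0 ->
  exists2 s, total_dom_seq e s & size s = gamma_grt e.
Proof.
have size_bound s : total_dom_seq e s -> size s < #|T|.+1.
  rewrite /total_dom_seq legal_seqE => /andP[/andP[/card_uniqP <- _] _].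
  by rewrite ltnS max_card.
move=> s0_tds.
pose A := [pred k : 'I_#|T|.+1 | [exists t : k.-tuple T, total_dom_seq e t]].
have A_nonempty : 0 < #|A|.
  apply/card_gt0P; exists (Ordinal (size_bound s0 s0_tds)).
  by rewrite inE; apply/existsP; exists (in_tuple s0).
have [k /existsP [t t_tds] max_k] :=
  eq_bigmax_cond (@nat_of_ord #|T|.+1) A_nonempty.
by exists t; rewrite // size_tuple /gamma_grt max_k.
Qed.

End Extrema.

Theorem mainTheorem17 (T : finType) (e : rel T) :
  simple_graph e -> no_isolated e ->
  forall l : nat, gamma_t e <= l <= gamma_grt e ->
  exists s : seq T, total_dom_seq e s /\ size s = l.
Proof.
move=> [e_sym _] e_noiso l /andP[gamma_t_l l_grt].
have [D D_dom D_min] := gamma_t_attained e_noiso.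
pose complete acc := acc ++ greedy_ext e acc (enum D).
have complete_tds acc : legal_seq e acc -> total_dom_seq e (complete acc).
  exact: total_dom_seq_greedy_ext.
have [S S_tds S_max] : exists2 S, total_dom_seq e S & size S = gamma_grt e.
  apply: (gamma_grt_attained (s0 := complete [::])).
  by apply: complete_tds; rewrite legal_seqE.
pose f i := size (complete (take i S)).
have f_step i : f i.+1 <= (f i).+1 by exact: size_greedy_ext_take_succ.
have f0 : f 0 <= l.
  rewrite /f take0 /= (leq_trans (size_greedy_ext _ _ _)) // -cardE.
  exact: leq_trans D_min gamma_t_l.
have fS : l <= f (size S).
  by rewrite /f size_cat take_size S_max (leq_trans l_grt) ?leq_addr.
have [i _ fi] := discrete_ivt f_step f0 fS.
exists (complete (take i S)); split => //.
by apply/complete_tds/legal_seq_take; case/andP: S_tds.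
Qed.
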